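(* Let $\mathrm X$ be the Cantor set (a compact, totally disconnected metric space with no isolated points), let $\mathrm G$ be a countable discrete group, and let $\theta=(\{\mathrm X_t\}_{t\in\mathrm G},\{h_t\}_{t\in\mathrm G})$ be a topological partial action of $\mathrm G$ on $\mathrm X$ such that $\mathrm X_t$ is clopen for every $t\in\mathrm G$. Then the envelope space $\mathrm X^e$ is a locally compact Cantor set: it is Hausdorff, locally compact, has a countable basis consisting of clopen sets, and has no isolated points.
   Context: A (topological) partial action of a group $\mathrm G$ on a topological space $\mathrm X$ is a pair $\theta=(\{\mathrm X_t\}_{t\in\mathrm G},\{h_t\}_{t\in\mathrm G})$ where each $\mathrm X_t$ is an open subset of $\mathrm X$ and each $h_t:\mathrm X_{t^{-1}}\to\mathrm X_t$ is a homeomorphism, such that: (1) $\mathrm X_e=\mathrm X$ and $h_e=\mathrm{id}_{\mathrm X}$; (2) $h_t(\mathrm X_{t^{-1}}\cap\mathrm X_s)=\mathrm X_t\cap\mathrm X_{ts}$ for all $s,t$; (3) $h_t(h_s(x))=h_{ts}(x)$ for all $x\in\mathrm X_{s^{-1}}\cap\mathrm X_{s^{-1}t^{-1}}$. The envelope space $\mathrm X^e$ is the topological quotient of $\mathrm G\times\mathrm X$ ($\mathrm G$ discrete, product topology) by the equivalence relation $(r,x)\sim(s,y)\iff x\in\mathrm X_{r^{-1}s}$ and $h_{s^{-1}r}(x)=y$. *)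

From Stdlib Require Import List Classical.
Set Implicit Arguments.

Definition set (T : Type) := T -> Prop.

Section Topo.
Variable T : Type.
Variable opn : set T -> Prop.

Definition compl (A : set T) : set T := fun x => ~ A x.
Definition subset (A B : set T) : Prop := forall x, A x -> B x.
Definition clopen (A : set T) : Prop := opn A /\ opn (compl A).

Definition hausdorff : Prop :=
  forall a b : T, a <> b ->
  exists U V, opn U /\ opn V /\ U a /\ V b /\ (forall x, U x -> V x -> False).

Definition compact (K : set T) : Prop :=
  forall (I : Type) (U : I -> set T),
    (forall i, opn (U i)) -> (forall x, K x -> exists i, U i x) ->
    exists l : list I, forall x, K x -> exists i, In i l /\ U i x.

Definition locally_compact : Prop :=
  forall x : T, exists U K, opn U /\ U x /\ subset U K /\ compact K.

Definition countable_clopen_basis : Prop :=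
  exists B : nat -> set T,
    (forall n, clopen (B n)) /\
    (forall U x, opn U -> U x -> exists n, B n x /\ subset (B n) U).

Definition no_isolated_points : Prop :=
  forall x : T, ~ opn (fun y => y = x).
End Topo.

Definition cont_on (S T : Type) (opnS : set S -> Prop) (opnT : set T -> Prop)
  (f : S -> T) (A : set S) : Prop :=
  forall V, opnT V -> exists U, opnS U /\ forall x, A x -> (U x <-> V (f x)).

Definition homeo_between (T : Type) (opn : set T -> Prop) (f : T -> T) (A B : set T) : Prop :=
  exists g : T -> T,
    (forall x, A x -> B (f x)) /\ (forall y, B y -> A (g y)) /\
    (forall x, A x -> g (f x) = x) /\ (forall y, B y -> f (g y) = y) /\
    cont_on opn opn f A /\ cont_on opn opn g B.

(** ** The Cantor set {0,1}^N with the product topology *)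
Definition cantor := nat -> bool.
Definition cantor_open (U : set cantor) : Prop :=
  forall x, U x -> exists n, forall y, (forall k, k < n -> y k = x k) -> U y.

Record group := Group {
  gcar :> Type;
  gmul : gcar -> gcar -> gcar;
  ginv : gcar -> gcar;
  gone : gcar;
  gmulA : forall a b c, gmul a (gmul b c) = gmul (gmul a b) c;
  gmul1 : forall a, gmul gone a = a;
  gmulV : forall a, gmul (ginv a) a = gone
}.

Arguments gmul {g} _ _.
Arguments ginv {g} _.
Arguments gone g : assert.

Definition countable_group (G : group) : Prop :=
  exists f : nat -> G, forall g : G, exists n, f n = g.

Definition partial_action (G : group) (Xt : G -> set cantor) (h : G -> cantor -> cantor) : Prop :=
  (forall t, cantor_open (Xt t)) /\
  (forall t, homeo_between cantor_open (h t) (Xt (ginv t)) (Xt t)) /\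
  (forall x, Xt (gone G) x) /\ (forall x, h (gone G) x = x) /\
  (forall s t y, (exists x, Xt (ginv t) x /\ Xt s x /\ h t x = y) <->
                 (Xt t y /\ Xt (gmul t s) y)) /\
  (forall s t x, Xt (ginv s) x -> Xt (gmul (ginv s) (ginv t)) x ->
                 h t (h s x) = h (gmul t s) x).

Definition env_rel (G : group) (Xt : G -> set cantor) (h : G -> cantor -> cantor)
  (p q : G * cantor) : Prop :=
  Xt (gmul (ginv (fst p)) (fst q)) (snd p) /\ h (gmul (ginv (fst q)) (fst p)) (snd p) = snd q.

Arguments env_rel {G} Xt h p q.

Definition envelope (G : group) (Xt : G -> set cantor) (h : G -> cantor -> cantor) : Type :=
  { S : set (G * cantor) | exists p, S = env_rel Xt h p }.

Arguments envelope {G} Xt h.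

Definition env_q (G : group) (Xt : G -> set cantor) (h : G -> cantor -> cantor)
  (p : G * cantor) : envelope Xt h :=
  exist _ (env_rel Xt h p) (ex_intro _ p eq_refl).

Arguments env_q {G} Xt h p.

(* product topology on G x X, G discrete *)
Definition prod_open (G : group) (W : set (G * cantor)) : Prop :=
  forall g : G, cantor_open (fun x => W (g, x)).

Arguments prod_open {G} W.

Definition env_open (G : group) (Xt : G -> set cantor) (h : G -> cantor -> cantor)
  (U : set (envelope Xt h)) : Prop :=
  prod_open (fun p => U (env_q Xt h p)).

Arguments env_open {G} Xt h U.
Arguments partial_action {G} Xt h.

From Stdlib Require Import List Classical FunctionalExtensionality PropExtensionality
  ClassicalEpsilon Arith Cantor Lia.
Set Implicit Arguments.

(* For t : G the
   "slice" map a |-> [t,a] embeds X into X^e, and everything is proved through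
   the images [t,A] := { [t,a] | a \in A } of subsets A of X:
   - the preimage of [t,A] under the slice g is X_{g^-1 t} \cap h_{t^-1 g}^-1(A),
     so [t,A] is open for A open, and clopen for A clopen since the domains
     X_{g^-1 t} are clopen;
   - each slice is injective, so two points of one slice are separated by the
     images of two disjoint cylinders; points [r,x], [s,y] with x \notin X_{r^-1 s}
     are separated by [r, X \ X_{r^-1 s}] and [s, X];
   - [t,X] is an open neighbourhood of [t,x] which is compact, being a
     continuous image of the compact Cantor space (Koenig's lemma);
   - images [g,C] of cylinders C, with g ranging over a countable enumeration
     of G and C over the countably many cylinders, form a clopen basis;
   - injectivity of slices shows that no point is isolated, since X has none. *)

Section GroupAlgebra.
Variable G : group.

Lemma gmulVr (a : G) : gmul a (ginv a) = gone G.
Proof.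
  rewrite <- (gmul1 _ (gmul a (ginv a))), <- (gmulV _ (ginv a)) at 1.
  rewrite <- gmulA, (gmulA _ (ginv a) a), gmulV, gmul1. apply gmulV.
Qed.

Lemma gmul1r (a : G) : gmul a (gone G) = a.
Proof. rewrite <- (gmulV _ a), gmulA, gmulVr, gmul1. reflexivity. Qed.

Lemma inv_uniq (x c : G) : gmul x c = gone G -> x = ginv c.
Proof. intro H. rewrite <- (gmul1r x), <- (gmulVr c), gmulA, H, gmul1. reflexivity. Qed.

Lemma ginvK (a : G) : ginv (ginv a) = a.
Proof. symmetry; apply inv_uniq, gmulVr. Qed.

Lemma ginvM (a b : G) : ginv (gmul a b) = gmul (ginv b) (ginv a).
Proof.
  symmetry; apply inv_uniq.
  rewrite <- gmulA, (gmulA _ (ginv a)), gmulV, gmul1, gmulV. reflexivity.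
Qed.

Lemma ginv_div (a b : G) : ginv (gmul (ginv a) b) = gmul (ginv b) a.
Proof. rewrite ginvM, ginvK. reflexivity. Qed.

Lemma gmul_div_div (a b c : G) : gmul (gmul (ginv a) b) (gmul (ginv b) c) = gmul (ginv a) c.
Proof. rewrite <- gmulA, (gmulA _ b), gmulVr, gmul1. reflexivity. Qed.
End GroupAlgebra.

Lemma exist_eq (A : Type) (P : A -> Prop) a b (pa : P a) (pb : P b) :
  a = b -> exist P a pa = exist P b pb.
Proof. intro E. subst b. f_equal. apply proof_irrelevance. Qed.

Section Quotient.
Variable G : group.
Variable Xt : G -> set cantor.
Variable h : G -> cantor -> cantor.
Hypothesis PA : partial_action Xt h.

Lemma h_maps t x : Xt (ginv t) x -> Xt t (h t x).
Proof. destruct PA as [_ [H _]]. destruct (H t) as [g [H1 _]]. auto. Qed.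

Lemma h_inj t x y : Xt (ginv t) x -> Xt (ginv t) y -> h t x = h t y -> x = y.
Proof.
  destruct PA as [_ [H _]]. destruct (H t) as [g [_ [_ [Hgh _]]]].
  intros Hx Hy E. rewrite <- (Hgh x Hx), <- (Hgh y Hy), E. reflexivity.
Qed.

Lemma h_cont t V : cantor_open V ->
  exists U, cantor_open U /\ forall x, Xt (ginv t) x -> (U x <-> V (h t x)).
Proof. intro HV. destruct PA as [_ [H _]]. destruct (H t) as [g [_ [_ [_ [_ [Hc _]]]]]]. auto. Qed.

Lemma env_refl p : env_rel Xt h p p.
Proof.
  destruct PA as [_ [_ [H1 [H2 _]]]]. destruct p as [r x]; unfold env_rel; simpl.
  rewrite gmulV. auto.
Qed.

Lemma env_sym p q : env_rel Xt h p q -> env_rel Xt h q p.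
Proof.
  destruct PA as [_ [_ [H1 [H2 [_ Hcomp]]]]].
  destruct p as [r x], q as [s y]; unfold env_rel; simpl.
  intros [Hx <-]. split.
  - apply h_maps. rewrite ginv_div. exact Hx.
  - rewrite Hcomp, gmul_div_div, gmulV; [apply H2 | rewrite ginv_div; exact Hx |].
    rewrite !ginv_div, gmul_div_div, gmulV. apply H1.
Qed.

Lemma env_trans p q w : env_rel Xt h p q -> env_rel Xt h q w -> env_rel Xt h p w.
Proof.
  destruct PA as [_ [_ [_ [_ [Hdom Hcomp]]]]].
  destruct p as [r x], q as [s y], w as [u z]; unfold env_rel; simpl.
  intros [Hx <-] [Hy <-].
  (* x lies in X_{r^-1 u} by the domain axiom applied to h_{s^-1 r}. *)
  assert (Hxu : Xt (gmul (ginv r) u) x).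
  { destruct (proj2 (Hdom (gmul (ginv r) u) (gmul (ginv s) r) (h (gmul (ginv s) r) x)))
      as [x' [Hx' [Hx'u Ex']]].
    - split; [apply h_maps; rewrite ginv_div; exact Hx | rewrite gmul_div_div; exact Hy].
    - rewrite ginv_div in Hx'.
      replace x with x'; [exact Hx'u |].
      apply h_inj with (t := gmul (ginv s) r); rewrite ?ginv_div; assumption. }
  split; [exact Hxu |].
  rewrite Hcomp, gmul_div_div; [reflexivity | rewrite ginv_div; exact Hx |].
  rewrite !ginv_div, gmul_div_div. exact Hxu.
Qed.

Lemma class_eq p q : env_rel Xt h p q -> env_q Xt h p = env_q Xt h q.
Proof.
  intro E. apply exist_eq, functional_extensionality; intro w.
  apply propositional_extensionality; split; intro H.
  - apply env_trans with p; [apply env_sym |]; auto.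
  - apply env_trans with q; auto.
Qed.

Lemma class_eq_rel p q : env_q Xt h p = env_q Xt h q -> env_rel Xt h p q.
Proof. intro E. apply (f_equal (@proj1_sig _ _)) in E. simpl in E. rewrite E. apply env_refl. Qed.
End Quotient.

Lemma env_surj (G : group) (Xt : G -> set cantor) (h : G -> cantor -> cantor)
  (e : envelope Xt h) : exists p, e = env_q Xt h p.
Proof. destruct e as [S [p Hp]]. exists p. subst S. reflexivity. Qed.

Definition cyl (x : cantor) (n : nat) : set cantor := fun y => forall k, k < n -> y k = x k.
Definition upd (x : cantor) (n : nat) (v : bool) : cantor := fun k => if Nat.eqb k n then v else x k.

Lemma cyl_open x n : cantor_open (cyl x n).
Proof. intros y Hy. exists n. intros w Hw k Hk. rewrite Hw by auto. auto. Qed.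

Lemma cyl_copen x n : cantor_open (compl (cyl x n)).
Proof. intros y Hy. exists n. intros w Hw C. apply Hy. intros k Hk. rewrite <- Hw by auto. auto. Qed.

Lemma coord_open k v : cantor_open (fun a : cantor => a k = v).
Proof. intros y Hy. exists (S k). intros w Hw. rewrite Hw by lia. auto. Qed.

Lemma open_inter A B : cantor_open A -> cantor_open B -> cantor_open (fun x => A x /\ B x).
Proof.
  intros HA HB x [Ax Bx]. destruct (HA x Ax) as [n Hn], (HB x Bx) as [m Hm].
  exists (max n m). intros y Hy. split; [apply Hn | apply Hm]; intros k Hk; apply Hy; lia.
Qed.

Lemma open_union A B : cantor_open A -> cantor_open B -> cantor_open (fun x => A x \/ B x).
Proof.
  intros HA HB x [Ax | Bx];
    [destruct (HA x Ax) as [n Hn] | destruct (HB x Bx) as [n Hn]]; exists n; auto.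
Qed.

Lemma open_ext A B : cantor_open A -> (forall x, A x <-> B x) -> cantor_open B.
Proof.
  intros HA E x Bx. destruct (HA x (proj2 (E x) Bx)) as [n Hn].
  exists n. intros; apply E; auto.
Qed.

(* Koenig's lemma: if no finite subcover exists, the branch that always
   descends into a half-cylinder which is not finitely covered converges to a
   point whose covering open set would cover one of those cylinders. *)
Fixpoint bad_branch (covered : cantor -> nat -> Prop) (n : nat) : cantor :=
  match n with
  | 0 => fun _ => false
  | S n => let b := bad_branch covered n in
           if excluded_middle_informative (covered (upd b n false) (S n))
           then upd b n true else upd b n false
  end.

Lemma bad_branch_stable covered n k : k < n -> bad_branch covered n k = bad_branch covered (S k) k.
Proof.
  induction n as [| n IH]; intro Hk; [lia |].
  destruct (Nat.eq_dec k n) as [-> | Hkn]; [reflexivity |].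
  rewrite <- IH by lia. simpl.
  destruct (excluded_middle_informative _); unfold upd;
    rewrite (proj2 (Nat.eqb_neq k n) Hkn); reflexivity.
Qed.

Theorem cantor_compact : compact cantor_open (fun _ => True).
Proof.
  intros I U HU Hcov. apply NNPP; intro Hnot.
  set (covered := fun x n => exists l : list I,
                    forall y, cyl x n y -> exists i, In i l /\ U i y).
  assert (halves : forall x n, covered (upd x n false) (S n) ->
                               covered (upd x n true) (S n) -> covered x n).
  { intros x n [l0 H0] [l1 H1]. exists (l0 ++ l1). intros y Hy.
    assert (Hyb : cyl (upd x n (y n)) (S n) y).
    { intros k Hk. unfold upd. destruct (Nat.eqb_spec k n); [subst; auto | apply Hy; lia]. }
    destruct (y n); [destruct (H1 y Hyb) as [i [Hi Ui]] | destruct (H0 y Hyb) as [i [Hi Ui]]];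
      exists i; split; auto; apply in_or_app; auto. }
  assert (uncovered : forall n, ~ covered (bad_branch covered n) n).
  { induction n as [| n IH].
    - intros [l Hl]. apply Hnot. exists l. intros x _. apply Hl. intros k Hk; lia.
    - simpl. destruct (excluded_middle_informative _) as [C | C]; [| exact C].
      intro C'. apply IH, halves; auto. }
  set (z := fun k => bad_branch covered (S k) k).
  destruct (Hcov z Logic.I) as [i Hi]. destruct (HU i z Hi) as [m Hm].
  apply (uncovered m). exists (i :: nil). intros y Hy. exists i; split; [left; reflexivity |].
  apply Hm. intros k Hk. rewrite Hy by auto. apply bad_branch_stable; auto.
Qed.

(* Every finite prefix of a point is the binary expansion of a natural number;
   this makes the set of cylinders countable. *)
Lemma prefix_code len : forall x : cantor, exists c, forall k, k < len -> Nat.testbit c k = x k.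
Proof.
  induction len as [| len IH]; intro x; [exists 0; intros; lia |].
  destruct (IH (fun k => x (S k))) as [c Hc].
  exists (2 * c + Nat.b2n (x 0)). intros [| k] Hk.
  - apply Nat.testbit_0_r.
  - rewrite Nat.testbit_succ_r. apply Hc. lia.
Qed.

Section Slices.
Variable G : group.
Variable Xt : G -> set cantor.
Variable h : G -> cantor -> cantor.
Hypothesis PA : partial_action Xt h.

Definition slice_img (t : G) (A : set cantor) : set (envelope Xt h) :=
  fun e => exists a, A a /\ e = env_q Xt h (t, a).

Lemma slice_img_mem t (A : set cantor) a : A a -> slice_img t A (env_q Xt h (t, a)).
Proof. intro Ha. exists a. auto. Qed.

Lemma slice_inj t a b : env_q Xt h (t, a) = env_q Xt h (t, b) -> a = b.
Proof.
  intro E. destruct (class_eq_rel PA E) as [_ Hab]. simpl in Hab.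
  destruct PA as [_ [_ [_ [Hone _]]]]. rewrite gmulV, Hone in Hab. exact Hab.
Qed.

Lemma slice_img_preimage t A g z : slice_img t A (env_q Xt h (g, z)) <->
  Xt (gmul (ginv g) t) z /\ A (h (gmul (ginv t) g) z).
Proof.
  split.
  - intros [a [Ha E]]. destruct (class_eq_rel PA E) as [Hz Ea]. simpl in Hz, Ea.
    subst a. auto.
  - intros [Hz Ha]. eexists; split; [exact Ha |]. apply (class_eq PA). split; auto.
Qed.

(* Through the preimage description, openness of [t,A] reduces to openness of
   the sets U with U = h_{t^-1 g}^-1(A) on the domain X_{g^-1 t}. *)
Lemma slice_img_open t A : cantor_open A -> env_open Xt h (slice_img t A).
Proof.
  intros HA g. destruct (h_cont PA (gmul (ginv t) g) HA) as [U [HU E]].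
  rewrite ginv_div in E.
  apply open_ext with (fun z => Xt (gmul (ginv g) t) z /\ U z).
  - apply open_inter; [apply PA | exact HU].
  - intro z. rewrite slice_img_preimage. split; intros [H1 H2]; split; auto; apply E; auto.
Qed.

Hypothesis CL : forall t : G, clopen cantor_open (Xt t).

Lemma slice_img_closed t A : cantor_open (compl A) -> env_open Xt h (compl (slice_img t A)).
Proof.
  intros HcA g. destruct (h_cont PA (gmul (ginv t) g) HcA) as [U [HU E]].
  rewrite ginv_div in E.
  apply open_ext with (fun z => compl (Xt (gmul (ginv g) t)) z \/
                                (Xt (gmul (ginv g) t) z /\ U z)).
  - apply open_union; [apply CL | apply open_inter; [apply CL | exact HU]].
  - intro z. unfold compl at 2. rewrite slice_img_preimage. split.
    + intros [H | [H1 H2]] [K1 K2]; [contradiction | apply (E z H1); auto].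
    + intro H. destruct (classic (Xt (gmul (ginv g) t) z)) as [K | K]; [right | left; exact K].
      split; auto. apply E; auto. intro Ah. apply H; auto.
Qed.
End Slices.

Arguments slice_img {G Xt} h t A.

Section Envelope.
Variable G : group.
Variable Xt : G -> set cantor.
Variable h : G -> cantor -> cantor.
Hypothesis PA : partial_action Xt h.
Hypothesis CL : forall t : G, clopen cantor_open (Xt t).

Theorem envelope_hausdorff : hausdorff (env_open Xt h).
Proof.
  intros e1 e2 Ne.
  destruct (env_surj e1) as [[r x] ->], (env_surj e2) as [[s y] ->].
  destruct (classic (Xt (gmul (ginv r) s) x)) as [Hx | Hx].
  - (* [r,x] = [s,x'] with x' <> y: separate by a coordinate where they differ. *)
    set (x' := h (gmul (ginv s) r) x).
    rewrite (class_eq PA (p := (r, x)) (q := (s, x'))) in Ne |- * by (split; auto).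
    assert (Hd : x' <> y) by (intros ->; auto).
    destruct (not_all_ex_not _ _ (fun H => Hd (functional_extensionality _ _ H))) as [k Hk].
    exists (slice_img h s (fun a => a k = x' k)), (slice_img h s (fun a => a k = y k)).
    split; [apply (slice_img_open PA), coord_open |].
    split; [apply (slice_img_open PA), coord_open |].
    split; [apply slice_img_mem; reflexivity |].
    split; [apply slice_img_mem; reflexivity |].
    intros e [a [Ha ->]] [b [Hb Eb]]. apply (slice_inj PA) in Eb. congruence.
  - (* No point of [r, X \ X_{r^-1 s}] is related to a point of slice s. *)
    exists (slice_img h r (compl (Xt (gmul (ginv r) s)))), (slice_img h s (fun _ => True)).
    split; [apply (slice_img_open PA), CL |].
    split; [apply (slice_img_open PA); intros z _; exists 0; auto |].
    split; [apply slice_img_mem; exact Hx |].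
    split; [apply slice_img_mem; exact Logic.I |].
    intros e [a [Ha ->]] [b [_ Eb]]. apply Ha, (class_eq_rel PA Eb).
Qed.

Theorem envelope_locally_compact : locally_compact (env_open Xt h).
Proof.
  intro e. destruct (env_surj e) as [[t x] ->].
  exists (slice_img h t (fun _ => True)), (slice_img h t (fun _ => True)).
  split; [apply (slice_img_open PA); intros z _; exists 0; auto |].
  split; [apply slice_img_mem; auto |].
  split; [intros z Hz; exact Hz |].
  (* Pull the cover back along the slice t and use compactness of X. *)
  intros I W HW Hcov.
  destruct (cantor_compact (fun i a => W i (env_q Xt h (t, a)))) as [l Hl].
  - intro i. apply (HW i t).
  - intros a _. apply Hcov, slice_img_mem. auto.
  - exists l. intros e [a [_ ->]]. apply Hl. auto.
Qed.

Theorem envelope_no_isolated_points : no_isolated_points (env_open Xt h).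
Proof.
  intros e He. destruct (env_surj e) as [[t x] ->].
  destruct (He t x eq_refl) as [n Hn].
  (* Flipping bit n of x keeps [t,x] in the open singleton, contradicting injectivity. *)
  assert (E : env_q Xt h (t, upd x n (negb (x n))) = env_q Xt h (t, x)).
  { apply Hn. intros k Hk. unfold upd. destruct (Nat.eqb_spec k n); [lia | reflexivity]. }
  apply (slice_inj PA), (f_equal (fun f => f n)) in E.
  unfold upd in E. rewrite Nat.eqb_refl in E. destruct (x n); discriminate.
Qed.

(* The basic clopen set with index k encodes (group element, prefix length,
   prefix bits) by Cantor pairing. *)
Definition basic_clopen (f : nat -> G) (k : nat) : set (envelope Xt h) :=
  let (a, r) := of_nat k in
  let (len, c) := of_nat r in
  slice_img h (f a) (cyl (fun i => Nat.testbit c i) len).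

Theorem envelope_countable_clopen_basis : countable_group G -> countable_clopen_basis (env_open Xt h).
Proof.
  intros [f Hf]. exists (basic_clopen f). split.
  - intro k. unfold basic_clopen. destruct (of_nat k) as [a r], (of_nat r) as [len c].
    split; [apply (slice_img_open PA), cyl_open | apply slice_img_closed, cyl_copen; auto].
  - intros U e HU Ue. destruct (env_surj e) as [[g z] ->].
    destruct (HU g z Ue) as [m Hm].
    destruct (prefix_code m z) as [c Hc]. destruct (Hf g) as [a <-].
    exists (to_nat (a, to_nat (m, c))). unfold basic_clopen. rewrite !cancel_of_to. split.
    + apply slice_img_mem. intros k Hk. symmetry; auto.
    + intros e' [b [Hb ->]]. apply Hm. intros k Hk. rewrite Hb by auto. auto.
Qed.
End Envelope.

Theorem proposition3p2 (G : group) (Xt : G -> set cantor) (h : G -> cantor -> cantor) :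
  countable_group G ->
  partial_action Xt h ->
  (forall t : G, clopen cantor_open (Xt t)) ->
  hausdorff (env_open Xt h) /\
  locally_compact (env_open Xt h) /\
  countable_clopen_basis (env_open Xt h) /\
  no_isolated_points (env_open Xt h).
Proof.
  intros HG PA CL.
  split; [exact (envelope_hausdorff PA CL) |].
  split; [exact (envelope_locally_compact PA) |].
  split; [exact (envelope_countable_clopen_basis PA CL HG) |].
  exact (envelope_no_isolated_points PA).
Qed.
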